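(* Let $M\ge1$. If $\mathbf a\in\mathcal A_M$ and $\mathbf b\in\mathcal A_1$, then $\mathbf a\circ\mathbf b\in\mathcal A_M$.
   Context: Order and word operations. Sequences and words over $\{0,\dots,M\}$ are ordered lexicographically. Words are compared via $\mathbf c\prec\mathbf d$ iff $\mathbf c0^\infty\prec\mathbf d0^\infty$. For a word $c_1\dots c_k$: - if $c_k<M$, then $c_1\dots c_k^+=c_1\dots c_{k-1}(c_k+1)$; - if $c_k>0$, then $c_1\dots c_k^-=c_1\dots c_{k-1}(c_k-1)$; - the reflection is $\overline{c_1\dots c_k}=(M-c_1)\dots(M-c_k)$. Fundamental words. A word $a_1\dots a_m$ ($m\ge2$) over $\{0,\dots,M\}$ is fundamental if $\overline{a_1\dots a_{m-i}}\preceq a_{i+1}\dots a_m\prec a_1\dots a_{m-i}$ for all $1\le i<m$. When $M\ge2$, a one-letter word $a_1$ is fundamental if $M-a_1\le a_1<M$. $\mathcal A_M$ denotes the set of fundamental words over $\{0,\dots,M\}$, and $\mathcal A_1$ the set for $M=1$ (these all begin with $1$). The graph and labelings. For $\mathbf a\in\mathcal A_M$, let $G$ have vertices Start, $A$, $B$ and edges - $e_0$: Start$\to A$, - $e_1$: $A\to B$, - $e_2$: $B\to B$, - $e_3$: $B\to A$, - $e_4$: $A\to A$. Label them by - $\mathcal L_{\mathbf a}$: $e_0,e_3\mapsto\mathbf a^+$; $e_1\mapsto\overline{\mathbf a^+}$; $e_2\mapsto\mathbf a$; $e_4\mapsto\overline{\mathbf a}$; - $\mathcal L^*$: $e_0,e_3,e_4\mapsto1$;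 $e_1,e_2\mapsto0$. The map $\Phi_{\mathbf a}$. For a path $e_{i_1}\dots e_{i_k}$ with $i_1=0$, set $\Phi_{\mathbf a}(\mathcal L_{\mathbf a}(e_{i_1})\cdots\mathcal L_{\mathbf a}(e_{i_k}))=\mathcal L^*(e_{i_1}\dots e_{i_k})$. This gives a bijection between such block words and binary words beginning with $1$. Composition. For $\mathbf a\in\mathcal A_M$ and $\mathbf b\in\mathcal A_1$, the composition $\mathbf a\circ\mathbf b:=\Phi_{\mathbf a}^{-1}(\mathbf b)$ is the unique such block word (of length $|\mathbf a||\mathbf b|$) mapped to $\mathbf b$. *)

From mathcomp Require Import all_boot.
Set Implicit Arguments. Unset Strict Implicit. Unset Printing Implicit Defensive.

Definition seq_lt (u v : nat -> nat) : Prop :=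
  exists n, (forall i, i < n -> u i = v i) /\ u n < v n.

(* The infinite sequence c 0^oo attached to a finite word c. *)
Definition pad0 (c : seq nat) : nat -> nat := fun i => nth 0 c i.

(* c < d  iff  c0^oo < d0^oo ;  c <= d iff c0^oo <= d0^oo *)
Definition wlt (c d : seq nat) : Prop := seq_lt (pad0 c) (pad0 d).
Definition wle (c d : seq nat) : Prop :=
  wlt c d \/ (forall i, pad0 c i = pad0 d i).

(* c^+ : increase the last letter by one (only used when last letter < M). *)
Definition wplus (c : seq nat) : seq nat :=
  set_nth 0 c (size c).-1 (last 0 c).+1.

Definition wrefl (M : nat) (c : seq nat) : seq nat := map (fun x => M - x) c.

Definition fundamental (M : nat) (a : seq nat) : Prop :=
  all (fun x => x <= M) a /\
  ( (2 <= size a /\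
     forall i, 1 <= i < size a ->
       wle (wrefl M (take (size a - i) a)) (drop i a) /\
       wlt (drop i a) (take (size a - i) a))
  \/ (size a = 1 /\ 2 <= M /\ M - head 0 a <= head 0 a < M) ).

Inductive vertex := VStart | VA | VB.
Inductive edge := e0 | e1 | e2 | e3 | e4.

Definition esrc (e : edge) : vertex :=
  match e with e0 => VStart | e1 => VA | e2 => VB | e3 => VB | e4 => VA end.
Definition etgt (e : edge) : vertex :=
  match e with e0 => VA | e1 => VB | e2 => VB | e3 => VA | e4 => VA end.

Definition La (M : nat) (a : seq nat) (e : edge) : seq nat :=
  match e with
  | e0 | e3 => wplus a
  | e1 => wrefl M (wplus a)
  | e2 => a
  | e4 => wrefl M a
  end.

Definition Lstar (e : edge) : nat :=
  match e with e0 | e3 | e4 => 1 | e1 | e2 => 0 end.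

Fixpoint walk_from (v : vertex) (p : seq edge) : Prop :=
  match p with
  | [::] => True
  | e :: p' => esrc e = v /\ walk_from (etgt e) p'
  end.

Definition is_start_path (p : seq edge) : Prop :=
  walk_from VStart p /\ head e1 p = e0.

(* Phi_a^{-1}: from a vertex, the unique outgoing edge with L^*-label = bit. *)
Definition next_edge (v : vertex) (bit : nat) : edge :=
  match v with
  | VStart => e0
  | VA => if bit == 0 then e1 else e4
  | VB => if bit == 0 then e2 else e3
  end.

Fixpoint path_from (v : vertex) (bits : seq nat) : seq edge :=
  match bits with
  | [::] => [::]
  | x :: bs => let e := next_edge v x in e :: path_from (etgt e) bs
  end.

(* The path starting with e0 whose L^*-label is b (b must begin with 1). *)
Definition path_of (b : seq nat) : seq edge := path_from VStart b.

(* Composition a o b := Phi_a^{-1}(b) = L_a(path_of b) (concatenated blocks). *)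
Definition wcomp (M : nat) (a b : seq nat) : seq nat :=
  flatten (map (La M a) (path_of b)).

Lemma path_of_spec (b : seq nat) :
  all (fun x => x <= 1) b -> head 0 b = 1 ->
  is_start_path (path_of b) /\ map Lstar (path_of b) = b.
Proof.
case: b => [|x b] //= Hb Hx; subst x.
have H : forall bs v, v = VA \/ v = VB -> all (fun x => x <= 1) bs ->
   walk_from v (path_from v bs) /\ map Lstar (path_from v bs) = bs.
  elim=> [|y bs IH] v Hv //= /andP[Hy Hbs].
  have Hy' : y = 0 \/ y = 1 by case: y Hy => [|[|]]; auto.
  case: Hv => ->; case: Hy' => ->; simpl;
    (split; [split => //; apply IH; auto | f_equal; apply IH; auto]).
move: Hb => /andP[_ Hb].
rewrite /is_start_path /=; split; [split => //; split => //; apply H; auto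
  | f_equal; apply H; auto].
Qed.

From mathcomp Require Import all_boot all_order zify.
Import Order.DefaultSeqLexiOrder Order.TTheory.
Set Implicit Arguments. Unset Strict Implicit. Unset Printing Implicit Defensive.

(* Write m = |a|, n = |b|. For binary b beginning with 1, a o b is the concatenation
   of n blocks of length m, the j-th one being a, a^+, refl(a^+) or refl(a) according
   to the bits b_(j-1) b_j (with b_0 = 0). Between words of equal length the block map
   is strictly increasing, and reflecting the bits reflects the blocks. Now shift
   c = a o b by i = q m + r.
   If r = 0, the suffix of c and its prefix of the same length (or its reflection) are
   block images of the suffix and the prefix of b of length n - q (or its reflection),
   so the inequalities for b carry over by monotonicity when both block words start
   after the same bit; otherwise their first blocks already decide, because
   refl(a) < a^+ and refl(a^+) < a.
   If r > 0, the prefix of c begins with a^+ (or with its first m - r letters at the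
   last block), whereas the suffix begins with drop r B ++ take r B' for two consecutive
   blocks B, B'; the inequalities for a at the shifts r and m - r put this window
   strictly between refl(a^+) and a^+. *)

Notation word_over M s := (all (fun z => z <= M) s).

Section LexiEqualSize.
Context {disp : Order.disp_t} {T : orderType disp}.
Implicit Types s t : seq T.

Lemma ltxi_cat s1 s2 t1 t2 : size s1 = size s2 ->
  (s1 ++ t1 < s2 ++ t2)%O = (s1 < s2)%O || (s1 == s2) && (t1 < t2)%O.
Proof.
elim: s1 s2 => [|x s1 IH] [|y s2] //= [eq_size].
by rewrite !ltxi_cons IH // eqseq_cons; case: (ltgtP x y).
Qed.

Lemma ltxi_catl s1 s2 t1 t2 : size s1 = size s2 ->
  (s1 < s2)%O -> (s1 ++ t1 < s2 ++ t2)%O.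
Proof. by move=> eq_size lt_s; rewrite ltxi_cat // lt_s. Qed.

Lemma ltxi_catr s1 s2 t1 t2 : size s1 = size s2 ->
  (s1 <= s2)%O -> (t1 < t2)%O -> (s1 ++ t1 < s2 ++ t2)%O.
Proof.
move=> eq_size; rewrite le_eqVlt => /orP[/eqP <- lt_t|lt_s _].
  by rewrite ltxi_cat // eqxx lt_t orbT.
exact: ltxi_catl.
Qed.

Lemma ltxi_take k s t : size s = size t -> (take k s < take k t)%O -> (s < t)%O.
Proof.
move=> eq_size lt_take; rewrite -(cat_take_drop k s) -(cat_take_drop k t).
by apply: ltxi_catl lt_take; rewrite !size_take eq_size.
Qed.

End LexiEqualSize.

Lemma ltxi_seq1 (x y : nat) : ([:: x] < [:: y])%O = (x < y).
Proof. by rewrite ltxi_cons leEnat implybF -ltnNge andb_idl // => /ltnW. Qed.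

Lemma wlt_ltxi s t : size s = size t -> wlt s t <-> (s < t)%O.
Proof.
rewrite /wlt /seq_lt /pad0.
elim: s t => [|x s IH] [|y t] //= => [_|[eq_size]].
  by split=> // -[n []]; rewrite !nth_nil.
rewrite ltxi_cons leEnat; split.
- case=> -[|n] [eq_pre /= lt_n]; first by rewrite ltnW //= leqNgt lt_n.
  have /= -> := eq_pre 0 isT; rewrite leqnn /=.
  by apply/IH => //; exists n; split=> // i lt_in; apply: (eq_pre i.+1).
- case: ltngtP => //= [lt_xy _|<-]; first by exists 0.
  case/IH=> // n [eq_pre lt_n].
  by exists n.+1; split=> // -[|i] //= /eq_pre.
Qed.

Lemma wle_lexi s t : size s = size t -> wle s t <-> (s <= t)%O.
Proof.
move=> eq_size; split.
- case=> [/(wlt_ltxi eq_size)/ltW //|eq_pad].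
  by rewrite (eq_from_nth (x0 := 0) eq_size (fun i _ => eq_pad i)).
- rewrite le_eqVlt => /orP[/eqP ->|/(wlt_ltxi eq_size)]; [right|left] => //.
Qed.

Lemma word_over_take M k s : word_over M s -> word_over M (take k s).
Proof. by move/allP=> s_over; apply/allP=> z /mem_take/s_over. Qed.

Lemma word_over_drop M k s : word_over M s -> word_over M (drop k s).
Proof. by move/allP=> s_over; apply/allP=> z /mem_drop/s_over. Qed.

Lemma nth_word_over M s i : word_over M s -> nth 0 s i <= M.
Proof.
move=> s_over; case: (ltnP i (size s)) => [lt_is|le_si]; last by rewrite nth_default.
exact: (all_nthP 0 s_over).
Qed.

Section Reflection.
Variable M : nat.
Implicit Types s t : seq nat.

Lemma size_wrefl s : size (wrefl M s) = size s. Proof. exact: size_map. Qed.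
Lemma wrefl_cat s t : wrefl M (s ++ t) = wrefl M s ++ wrefl M t.
Proof. exact: map_cat. Qed.
Lemma take_wrefl k s : take k (wrefl M s) = wrefl M (take k s).
Proof. by rewrite /wrefl map_take. Qed.
Lemma drop_wrefl k s : drop k (wrefl M s) = wrefl M (drop k s).
Proof. by rewrite /wrefl map_drop. Qed.

Lemma word_over_wrefl s : word_over M (wrefl M s).
Proof. by apply/allP=> _ /mapP[z _ ->]; apply: leq_subr. Qed.

Lemma wreflK s : word_over M s -> wrefl M (wrefl M s) = s.
Proof. by elim: s => //= x s IH /andP[le_xM /IH ->]; rewrite subKn. Qed.

Lemma ltxi_wrefl2 s t : size s = size t -> word_over M s -> word_over M t ->
  (wrefl M s < wrefl M t)%O = (t < s)%O.
Proof.
elim: s t => [|x s IH] [|y t] //= [eq_size] /andP[le_xM s_over] /andP[le_yM t_over].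
by rewrite !ltxi_cons !leEnat !leq_sub2lE // IH.
Qed.

Lemma lexi_wrefl2 s t : size s = size t -> word_over M s -> word_over M t ->
  (wrefl M s <= wrefl M t)%O = (t <= s)%O.
Proof. by move=> eq_size s_over t_over; rewrite !leNgt ltxi_wrefl2. Qed.

Lemma ltxi_wrefl_l s t : size s = size t -> word_over M s -> word_over M t ->
  (wrefl M s < t)%O = (wrefl M t < s)%O.
Proof.
move=> eq_size s_over t_over.
by rewrite -{1}(wreflK t_over) ltxi_wrefl2 ?size_wrefl ?word_over_wrefl.
Qed.

Lemma lexi_wrefl_l s t : size s = size t -> word_over M s -> word_over M t ->
  (wrefl M s <= t)%O = (wrefl M t <= s)%O.
Proof.
move=> eq_size s_over t_over.
by rewrite -{1}(wreflK t_over) lexi_wrefl2 ?size_wrefl ?word_over_wrefl.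
Qed.

End Reflection.

Section Increment.
Implicit Types s t : seq nat.

Lemma wplus_rcons s x : wplus (rcons s x) = rcons s x.+1.
Proof. by rewrite /wplus last_rcons size_rcons /=; elim: s => //= y s ->. Qed.

Lemma size_wplus s : 0 < size s -> size (wplus s) = size s.
Proof. by case/lastP: s => // s x _; rewrite wplus_rcons !size_rcons. Qed.

Lemma take_wplus k s : k < size s -> take k (wplus s) = take k s.
Proof.
case/lastP: s => // s x; rewrite size_rcons ltnS wplus_rcons => le_ks.
rewrite -!cats1 !take_cat ltn_neqAle le_ks andbT.
by case: eqP => // ->; rewrite subnn !take0.
Qed.

Lemma drop_wplus k s : k < size s -> drop k (wplus s) = wplus (drop k s).
Proof.
case/lastP: s => // s x; rewrite size_rcons ltnS wplus_rcons => le_ks.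
by rewrite !drop_rcons // wplus_rcons.
Qed.

Lemma ltxi_wplus s : 0 < size s -> (s < wplus s)%O.
Proof.
case/lastP: s => // s x _; rewrite wplus_rcons -!cats1 ltxi_cat // eqxx ltxx /=.
by rewrite ltxi_seq1.
Qed.

Lemma wplus_lexi s t : size s = size t -> (s < t)%O -> (wplus s <= t)%O.
Proof.
case/lastP: s => [|s x]; case/lastP: t => [|t y]; rewrite ?size_rcons ?ltxx //.
move=> -[eq_size].
rewrite wplus_rcons -!cats1 ltxi_cat // le_eqVlt ltxi_cat // !ltxi_seq1.
case/orP=> [->|/andP[/eqP-> lt_xy]]; first by rewrite orbT.
by rewrite eqxx ltxx /= eqseq_cat // eqxx eqseq_cons andbT -leq_eqVlt.
Qed.

End Increment.

Definition suffix_bounded_at (M : nat) (c : seq nat) (i : nat) : Prop :=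
  (drop i c < take (size c - i) c)%O /\
  (wrefl M (take (size c - i) c) <= drop i c)%O.

Definition suffix_bounded (M : nat) (c : seq nat) : Prop :=
  forall i, 0 < i < size c -> suffix_bounded_at M c i.

Lemma suffix_boundedP M c :
  (forall i, 1 <= i < size c ->
     wle (wrefl M (take (size c - i) c)) (drop i c) /\
     wlt (drop i c) (take (size c - i) c)) <-> suffix_bounded M c.
Proof.
have eq_size i : size (take (size c - i) c) = size (drop i c).
  by rewrite size_drop size_takel // leq_subr.
split=> suffix_c i /suffix_c[le_i lt_i].
  by split; [apply/wlt_ltxi|apply/wle_lexi]; rewrite ?size_wrefl.
by split; [apply/wle_lexi|apply/wlt_ltxi]; rewrite ?size_wrefl.
Qed.

Lemma suffix_bounded_last M c : 2 <= size c -> suffix_bounded M c ->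
  last 0 c < head 0 c /\ M - head 0 c <= last 0 c.
Proof.
case: c => [|x c] //; case/lastP: c => [|c l] //= _.
rewrite last_rcons => /(_ (size c).+1); rewrite /suffix_bounded_at /= size_rcons.
rewrite subSn // subnn ltnSn drop_rcons // drop_size /= take0.
by case=> //; rewrite ltxi_seq1 lexi_cons leEnat implybT andbT.
Qed.

Lemma fundamental_size_gt0 M a : fundamental M a -> 0 < size a.
Proof. by case=> _ [[/ltnW ? _]|[-> _]]. Qed.

Lemma fundamental_suffix_bounded M c : fundamental M c -> suffix_bounded M c.
Proof.
case=> _ [[_ /suffix_boundedP //]|[size_c _ i]].
by rewrite size_c; case: i => [|[|]].
Qed.

Lemma fundamental_of_suffix_bounded M c :
  word_over M c -> 2 <= size c -> suffix_bounded M c -> fundamental M c.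
Proof. by move=> c_over size_c /suffix_boundedP; split=> //; left. Qed.

Lemma fundamental_wplus M a : fundamental M a ->
  word_over M (wplus a) /\ (wrefl M a < wplus a)%O.
Proof.
move=> a_fund; have a_suffix := fundamental_suffix_bounded a_fund.
case: a_fund => a_over [[size_a _]|[size_a [_ /andP[le_Mx lt_xM]]]]; last first.
  case: a size_a a_over le_Mx lt_xM {a_suffix} => [|x [|]] //= _ _ le_Mx lt_xM.
  by rewrite /wplus /= lt_xM ltxi_seq1; split=> //; lia.
have [lt_lx le_Ml] := suffix_bounded_last size_a a_suffix.
case: a size_a a_over lt_lx le_Ml {a_suffix} => [|x a] //; case/lastP: a => [|a l] //= _.
rewrite -rcons_cons wplus_rcons !all_rcons /= !last_rcons => /and3P[le_xM _ a_over].
move=> lt_lx le_Ml; rewrite le_xM a_over (leq_trans lt_lx le_xM) ltxi_cons !leEnat.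
by split=> //; apply/andP; split; lia.
Qed.

Lemma fundamental_binary b : fundamental 1 b ->
  [/\ 2 <= size b, head 0 b = 1 & last 0 b = 0].
Proof.
move=> b_fund; have b_suffix := fundamental_suffix_bounded b_fund.
case: b_fund => b_over [[size_b _]|[_ []]] //.
have [lt_lh _] := suffix_bounded_last size_b b_suffix.
case: b size_b b_over lt_lh {b_suffix} => [|x b] //= size_b /andP[le_x1 b_over].
have /allP/(_ _ (mem_last x b)) : word_over 1 (x :: b) by rewrite /= le_x1.
by split=> //; lia.
Qed.

Section Composition.
Variables (M : nat) (a : seq nat).
Hypotheses (a_gt0 : 0 < size a) (a_over : word_over M a)
  (wplus_a_over : word_over M (wplus a)) (wrefl_a_lt : (wrefl M a < wplus a)%O)
  (a_suffix : suffix_bounded M a).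

Local Notation m := (size a).

(* [block p x] labels the edge read with bit [x] from the vertex reached by bit [p]
   (A after 1, B after 0; Start acts as B): edges leaving A carry reflected labels,
   loops carry a and the edges changing the bit carry a^+. *)
Definition block (p x : nat) : seq nat :=
  let B := if x == p then a else wplus a in if p == 0 then B else wrefl M B.

Fixpoint blocks (p : nat) (w : seq nat) : seq nat :=
  if w is x :: w' then block p x ++ blocks x w' else [::].

Lemma label_path_from p w : p <= 1 -> word_over 1 w ->
  flatten (map (La M a) (path_from (if p == 0 then VB else VA) w)) = blocks p w.
Proof.
elim: w p => //= x w IH p le_p1 /andP[le_x1 w_over].
have {}IH := IH x le_x1 w_over.
by case: p le_p1 => [|[|]] //= _; case: x le_x1 IH => [|[|]] //= _ <-.
Qed.

Lemma wcomp_blocks b : word_over 1 b -> head 0 b = 1 -> wcomp M a b = blocks 0 b.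
Proof.
case: b => [|x b] //= /andP[_ b_over] ->.
by rewrite /wcomp /path_of /= -(label_path_from (p := 1)).
Qed.

Lemma size_block p x : size (block p x) = m.
Proof. by rewrite /block; case: eqP; case: eqP; rewrite ?size_wrefl ?size_wplus. Qed.

Lemma size_blocks p w : size (blocks p w) = size w * m.
Proof. by elim: w p => //= x w IH p; rewrite size_cat size_block IH. Qed.

Lemma word_over_block p x : word_over M (block p x).
Proof. by rewrite /block; case: eqP; case: eqP; rewrite // word_over_wrefl. Qed.

Lemma word_over_blocks p w : word_over M (blocks p w).
Proof. by elim: w p => //= x w IH p; rewrite all_cat word_over_block IH. Qed.

Lemma wrefl_block p x : p <= 1 -> x <= 1 ->
  wrefl M (block p x) = block (1 - p) (1 - x).
Proof. by case: p => [|[|]] // _; case: x => [|[|]] //= _; rewrite /block /= wreflK. Qed.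

Lemma wrefl_blocks p w : p <= 1 -> word_over 1 w ->
  wrefl M (blocks p w) = blocks (1 - p) (wrefl 1 w).
Proof.
elim: w p => //= x w IH p le_p1 /andP[le_x1 w_over].
by rewrite wrefl_cat wrefl_block // IH // subKn.
Qed.

Lemma drop_blocks p w q : q <= size w ->
  drop (q * m) (blocks p w) = blocks (nth 0 (p :: w) q) (drop q w).
Proof.
elim: w p q => [|x w IH] p [|q] le_qw; rewrite ?mul0n ?drop0 //.
by rewrite mulSnr -drop_drop (drop_size_cat _ (size_block p x)) IH.
Qed.

Lemma take_blocks p w q : take (q * m) (blocks p w) = blocks p (take q w).
Proof.
elim: w p q => [|x w IH] p [|q]; rewrite ?mul0n ?take0 //=.
by rewrite mulSn take_cat size_block ltnNge leq_addr /= addKn IH.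
Qed.

Lemma block_lt p : p <= 1 -> (block p 0 < block p 1)%O.
Proof.
case: p => [|[|]] // _; rewrite /block /=; first exact: ltxi_wplus.
by rewrite ltxi_wrefl2 ?size_wplus // ltxi_wplus.
Qed.

Lemma ltxi_blocks p u v : p <= 1 -> word_over 1 u -> word_over 1 v ->
  size u = size v -> (u < v)%O -> (blocks p u < blocks p v)%O.
Proof.
elim: u v p => [|x u IH] [|y v] p //= le_p1 /andP[le_x1 u_over] /andP[le_y1 v_over].
case=> eq_size; rewrite ltxi_cons leEnat; case: ltngtP => //= [lt_xy _|<- lt_uv].
  have [-> ->] : x = 0 /\ y = 1 by lia.
  by apply: ltxi_catl; [rewrite !size_block | exact: block_lt].
by rewrite ltxi_cat ?eqxx ?IH ?orbT.
Qed.

Lemma lexi_blocks p u v : p <= 1 -> word_over 1 u -> word_over 1 v ->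
  size u = size v -> (u <= v)%O -> (blocks p u <= blocks p v)%O.
Proof.
move=> le_p1 u_over v_over eq_size; rewrite le_eqVlt => /orP[/eqP -> //|lt_uv].
exact/ltW/ltxi_blocks.
Qed.

Lemma block1_lt_wplus x : x <= 1 -> (block 1 x < wplus a)%O.
Proof.
case: x => [|[|]] // _; rewrite /block /=.
apply: lt_trans wrefl_a_lt.
by rewrite ltxi_wrefl2 ?size_wplus // ltxi_wplus.
Qed.

Lemma ltxi_blocks10 u v : word_over 1 u -> size u = size v -> head 0 v = 1 ->
  (blocks 1 u < blocks 0 v)%O.
Proof.
case: u v => [|x u] [|y v] //= /andP[le_x1 _] _ ->.
by apply: ltxi_catl; [rewrite !size_block | exact: block1_lt_wplus].
Qed.

Lemma ltxi_blocks0 p u v : p <= 1 -> word_over 1 u -> word_over 1 v ->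
  size u = size v -> head 0 v = 1 -> (u < v)%O -> (blocks p u < blocks 0 v)%O.
Proof.
case: p => [|[|]] // _ u_over v_over eq_size head_v lt_uv; first exact: ltxi_blocks.
exact: ltxi_blocks10.
Qed.

Lemma lexi_blocks0 p u v : p <= 1 -> word_over 1 u -> word_over 1 v ->
  size u = size v -> head 0 v = 1 -> (u <= v)%O -> (blocks p u <= blocks 0 v)%O.
Proof.
case: p => [|[|]] // _ u_over v_over eq_size head_v le_uv; first exact: lexi_blocks.
exact/ltW/ltxi_blocks10.
Qed.

Section Window.
Variable r : nat.
Hypothesis r_range : 0 < r < m.

Local Notation s := (drop r a).
Local Notation t := (take (m - r) a).

Let lt_rm : r < m. Proof. by case/andP: r_range. Qed.
Let lt_mrm : m - r < m.
Proof. by rewrite ltn_subrL a_gt0 andbT; case/andP: r_range. Qed.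
Let size_s : size s = m - r. Proof. exact: size_drop. Qed.
Let size_t : size t = m - r. Proof. by rewrite size_takel ?leq_subr. Qed.
Let s_gt0 : 0 < size s. Proof. by rewrite size_s subn_gt0. Qed.
Let s_over : word_over M s. Proof. exact: word_over_drop. Qed.
Let t_over : word_over M t. Proof. exact: word_over_take. Qed.
Let wplus_s_over : word_over M (wplus s).
Proof. by rewrite -drop_wplus //; apply: word_over_drop. Qed.
Let lt_st : (s < t)%O. Proof. exact: (a_suffix r_range).1. Qed.
Let le_ts : (wrefl M t <= s)%O. Proof. exact: (a_suffix r_range).2. Qed.

Lemma size_drop_block p x : size (drop r (block p x)) = m - r.
Proof. by rewrite size_drop size_block. Qed.

Lemma drop_block0_lt p : p <= 1 -> (drop r (block p 0) < t)%O.
Proof.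
case: p => [|[|]] // _; rewrite /block /= ?drop_wrefl ?drop_wplus //.
rewrite ltxi_wrefl_l ?size_wplus ?size_t //.
exact: le_lt_trans le_ts (ltxi_wplus s_gt0).
Qed.

Lemma drop_block1_le p : p <= 1 -> (drop r (block p 1) <= t)%O.
Proof.
case: p => [|[|]] // _; rewrite /block /= ?drop_wrefl ?drop_wplus //.
  by apply: wplus_lexi; rewrite ?size_t.
by rewrite lexi_wrefl_l ?size_t.
Qed.

Lemma drop_block0_ge p : p <= 1 -> (wrefl M t <= drop r (block p 0))%O.
Proof.
move=> le_p1; rewrite lexi_wrefl_l ?size_drop_block ?word_over_drop ?word_over_block //.
by rewrite -drop_wrefl wrefl_block // subn0 drop_block1_le ?leq_subr.
Qed.

Lemma take_block1_lt y : (take r (block 1 y) < wplus (drop (m - r) a))%O.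
Proof.
have r'_range : 0 < m - r < m by rewrite subn_gt0 lt_rm lt_mrm.
have [lt_st' le_ts'] := a_suffix r'_range; rewrite (subKn (ltnW lt_rm)) in lt_st' le_ts'.
have -> : take r (block 1 y) = wrefl M (take r a).
  by rewrite /block /=; case: eqP; rewrite take_wrefl ?take_wplus.
apply: le_lt_trans le_ts' (ltxi_wplus _).
by rewrite size_drop (subKn (ltnW lt_rm)); case/andP: r_range.
Qed.

Lemma window_lt p x y : p <= 1 -> x <= 1 ->
  (drop r (block p x) ++ take r (block x y) < wplus a)%O.
Proof.
move=> le_p1; rewrite -(cat_take_drop (m - r) (wplus a)) take_wplus ?drop_wplus //.
case: x => [|[|]] // _.
  by apply: ltxi_catl; rewrite ?size_drop_block ?size_t ?drop_block0_lt.
apply: ltxi_catr; rewrite ?size_drop_block ?size_t ?drop_block1_le //.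
exact: take_block1_lt.
Qed.

Lemma window_gt p x y : p <= 1 -> x <= 1 -> y <= 1 ->
  (wrefl M (wplus a) < drop r (block p x) ++ take r (block x y))%O.
Proof.
move=> le_p1 le_x1 le_y1.
rewrite ltxi_wrefl_l ?size_cat ?size_drop_block ?size_takel ?size_block ?size_wplus
  ?subnK ?(ltnW lt_rm) // ?all_cat ?word_over_drop ?word_over_take ?word_over_block //.
rewrite wrefl_cat -drop_wrefl -take_wrefl !wrefl_block //.
by apply: window_lt; rewrite leq_subr.
Qed.

End Window.

Section BinaryWord.
Variable b : seq nat.
Hypotheses (b_over : word_over 1 b) (b_head : head 0 b = 1)
  (b_suffix : suffix_bounded 1 b).

Lemma blocks_suffix_aligned q : 0 < q < size b ->
  suffix_bounded_at M (blocks 0 b) (q * m).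
Proof.
move=> q_range; have [lt_uv le_vu] := b_suffix q_range.
case/andP: q_range => q_gt0 lt_qb.
rewrite /suffix_bounded_at size_blocks -mulnBl drop_blocks ?take_blocks ?(ltnW lt_qb) //.
set u := drop q b in lt_uv le_vu *; set v := take (size b - q) b in lt_uv le_vu *.
have eq_size : size u = size v by rewrite size_drop size_takel ?leq_subr.
have u_over : word_over 1 u by apply: word_over_drop.
have v_over : word_over 1 v by apply: word_over_take.
have head_v : head 0 v = 1.
  by rewrite /v -b_head; case: (b) lt_qb => //= x b' lt_qb; rewrite subSn.
have le_p1 := @nth_word_over 1 (0 :: b) q b_over.
split; first exact: ltxi_blocks0.
rewrite lexi_wrefl_l ?size_blocks ?eq_size ?word_over_blocks // wrefl_blocks //.
apply: lexi_blocks0; rewrite ?leq_subr ?size_wrefl ?word_over_wrefl //.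
by rewrite lexi_wrefl_l ?size_wrefl.
Qed.

Hypothesis b_last : last 0 b = 0.

Lemma blocks_suffix_unaligned q r : q < size b -> 0 < r < m ->
  suffix_bounded_at M (blocks 0 b) (q * m + r).
Proof.
move=> lt_qb r_range; have lt_rm : r < m by case/andP: r_range.
have blocks_b : blocks 0 b = wplus a ++ blocks 1 (behead b).
  by case: (b) b_head => //= _ b' ->.
have le_p1 := @nth_word_over 1 (0 :: b) q b_over.
have le_x1 := nth_word_over q b_over.
set p := nth 0 (0 :: b) q in le_p1 *.
have drop_qb := drop_nth 0 lt_qb.
set x := nth 0 b q in le_x1 drop_qb; set w := drop q.+1 b in drop_qb.
have drop_c : drop (q * m + r) (blocks 0 b) = drop r (block p x) ++ blocks x w.
  rewrite addnC -drop_drop drop_blocks ?(ltnW lt_qb) // drop_qb /=.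
  by rewrite drop_cat size_block lt_rm.
rewrite /suffix_bounded_at drop_c size_blocks.
have size_w : size w = size b - q.+1 by rewrite size_drop.
case: w size_w drop_c drop_qb => [|y w] size_w drop_c drop_qb.
  have size_b : size b = q.+1.
    by apply/eqP; rewrite eqn_leq -subn_eq0 -size_w lt_qb.
  have x0 : x = 0 by rewrite /x (_ : q = (size b).-1) ?nth_last // size_b.
  rewrite size_b mulSnr subnDl.
  rewrite cats0 x0 blocks_b take_cat size_wplus //.
  have lt_mrm : m - r < m by rewrite ltn_subrL a_gt0 andbT; case/andP: r_range.
  rewrite lt_mrm take_wplus //.
  by split; [apply: drop_block0_lt | apply: drop_block0_ge].
have le_m : m <= size b * m - (q * m + r).
  have le_qb : q.+2 <= size b by rewrite -subn_gt0 -size_w.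
  have := leq_mul le_qb (leqnn m); rewrite !mulSn.
  by clear -lt_rm; lia.
have le_y1 : y <= 1 by have := nth_word_over 1 (word_over_drop q b_over); rewrite drop_qb.
have take_u : take m (drop r (block p x) ++ blocks x (y :: w)) =
              drop r (block p x) ++ take r (block x y).
  rewrite take_cat size_drop_block ltnNge leq_subr /= (subKn (ltnW lt_rm)) /=.
  by rewrite take_cat size_block lt_rm.
have take_v : take m (take (size b * m - (q * m + r)) (blocks 0 b)) = wplus a.
  by rewrite take_takel // blocks_b take_size_cat ?size_wplus.
have eq_size : size (drop r (block p x) ++ blocks x (y :: w)) =
               size (take (size b * m - (q * m + r)) (blocks 0 b)).
  by rewrite -drop_c size_drop size_takel size_blocks ?leq_subr.
split.
  by apply: (ltxi_take (k := m)) => //; rewrite take_u take_v; apply: window_lt.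
apply/ltW/(ltxi_take (k := m)); first by rewrite size_wrefl.
by rewrite take_wrefl take_v take_u; apply: window_gt.
Qed.

Lemma blocks_suffix_bounded : suffix_bounded M (blocks 0 b).
Proof.
move=> i /andP[i_gt0 lt_i]; rewrite size_blocks in lt_i.
have lt_qb : i %/ m < size b by rewrite ltn_divLR.
rewrite (divn_eq i m) in i_gt0 *; have [r0|r_gt0] := posnP (i %% m).
  rewrite r0 addn0 muln_gt0 in i_gt0 *; case/andP: i_gt0 => q_gt0 _.
  by apply: blocks_suffix_aligned; rewrite q_gt0.
by apply: blocks_suffix_unaligned; rewrite ?r_gt0 ?ltn_mod.
Qed.

End BinaryWord.

End Composition.

Theorem lemma2p9 (M : nat) (a b : seq nat) :
  1 <= M -> fundamental M a -> fundamental 1 b -> fundamental M (wcomp M a b).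
Proof.
(* [1 <= M] already follows from [fundamental M a]. *)
move=> _ a_fund b_fund.
have [[a_over _] [b_over _]] := (a_fund, b_fund).
have a_gt0 := fundamental_size_gt0 a_fund.
have [wplus_a_over wrefl_a_lt] := fundamental_wplus a_fund.
have [size_b b_head b_last] := fundamental_binary b_fund.
rewrite wcomp_blocks //; apply: fundamental_of_suffix_bounded.
- exact: word_over_blocks.
- by rewrite size_blocks //; apply: (leq_trans size_b); rewrite leq_pmulr.
- by apply: blocks_suffix_bounded => //; apply: fundamental_suffix_bounded.
Qed.
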